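(* Let $c_2,c_3,a_0,a_1,a_2,b_0,b_1$ be constants, $\mu(t)=t^2+c_2t+c_3$, $\phi=a_0\mu(t)^2+a_1\mu(t)+a_2$, $\psi=b_0\mu(t)+b_1$, $\lambda_n=n((n-1)a_0+b_0)$, and $\operatorname{L}_n=\phi\,\mathbb{D}^2+\psi\,\mathbb{S}\mathbb{D}-\lambda_n I$. Assume that for each $n\ge0$ there is a unique monic polynomial $P_n$ of degree $n$ in $\mu(t)$ with $\operatorname{L}_n(P_n)=0$, and write $P_n=\vartheta_n+p_{1,n}\vartheta_{n-1}+p_{2,n}\vartheta_{n-2}+\cdots$. Then for each $n\ge1$ there exists $\beta_n$ such that the polynomial $$U_n=\operatorname{L}_{n+1}\big((\mu(t)-\beta_n)P_n\big)$$ has degree $n-1$ in $\mu(t)$; moreover $$\beta_n=p_{1,n}+f_n+\frac{k_{1,n+1}}{\lambda_n-\lambda_{n+1}},$$ and $U_n=t_n\vartheta_{n-1}+(\text{lower terms in the basis }\vartheta_k)$ with $$t_n=k_{2,n+1}+(f_n+p_{1,n}-\beta_n)k_{1,n}+(p_{1,n}f_{n-1}+p_{2,n}-\beta_np_{1,n})(\lambda_{n-1}-\lambda_{n+1}).$$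
   Context: Operators: $\mathbb{D}f(t)=\frac{f(t+1/2)-f(t-1/2)}{\mu(t+1/2)-\mu(t-1/2)}$ and $\mathbb{S}f(t)=\frac{f(t+1/2)+f(t-1/2)}{2}$, acting on polynomials in $\mu(t)$ (degree lowered by one, resp. preserved). Basis: $\vartheta_n(t)=(-4)^{-n}(2t+1/2+c_2)_n(-2t+1/2-c_2)_n$ (Pochhammer symbols), $\vartheta_k=0$ for $k<0$; $\vartheta_n$ is monic of degree $n$ in $\mu(t)$ and satisfies $\mathbb{D}\vartheta_n=n\vartheta_{n-1}$, $\mu(t)\vartheta_n=\vartheta_{n+1}+f_n\vartheta_n$, $\mathbb{S}\vartheta_n=\vartheta_n+g_n\vartheta_{n-1}$, where $f_n=-\frac{c_2^2}{4}+\frac{(2n+1)^2}{16}+c_3$ and $g_n=\frac{n(2n-1)}{4}$. The constants $k_{1,j},k_{2,j}$ are $k_{1,j}=a_0j(j-1)(f_{j-1}+f_{j-2})+b_0jf_{j-1}+a_1j(j-1)+b_0jg_{j-1}+b_1j$, $k_{2,j}=a_0j(j-1)f_{j-2}^2+a_1j(j-1)f_{j-2}+b_0jg_{j-1}f_{j-2}+a_2j(j-1)+b_1jg_{j-1}$; they are such that $\operatorname{L}_n(\vartheta_j)=(a_0j(j-1)+b_0j-\lambda_n)\vartheta_j+k_{1,j}\vartheta_{j-1}+k_{2,j}\vartheta_{j-2}$. *)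

(* Polynomials in t are elements of {poly R}; a "polynomial in
   mu(t)" is q \Po mu for some q : {poly R}. *)
From mathcomp Require Import all_boot all_order all_algebra.
Set Implicit Arguments. Unset Strict Implicit. Unset Printing Implicit Defensive.
Import Order.TTheory GRing.Theory Num.Theory.
Local Open Scope ring_scope.

Section Defs.
Variable R : numFieldType.

Definition mu (c2 c3 : R) : {poly R} := 'X^2 + c2 *: 'X + c3%:P.

Definition shiftp (f : {poly R}) : {poly R} := f \Po ('X + (2^-1 : R)%:P).
Definition shiftm (f : {poly R}) : {poly R} := f \Po ('X - (2^-1 : R)%:P).

Definition Dop (c2 c3 : R) (f : {poly R}) : {poly R} :=
  (shiftp f - shiftm f) %/ (shiftp (mu c2 c3) - shiftm (mu c2 c3)).

Definition Sop (f : {poly R}) : {poly R} := (2^-1 : R) *: (shiftp f + shiftm f).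

Definition pochp (p : {poly R}) (n : nat) : {poly R} :=
  \prod_(i < n) (p + (i%:R : R)%:P).

Definition theta (c2 : R) (n : nat) : {poly R} :=
  ((- 4 : R) ^- n) *:
    (pochp (2%:R *: 'X + (2^-1 + c2)%:P) n * pochp (- (2%:R *: 'X) + (2^-1 - c2)%:P) n).

Definition fcoef (c2 c3 : R) (n : nat) : R :=
  - (c2 ^+ 2) / 4%:R + ((2 * n + 1)%:R ^+ 2) / 16%:R + c3.

Definition gcoef (n : nat) : R := (n%:R * (2 * n%:R - 1)) / 4%:R.

Definition lam (a0 b0 : R) (n : nat) : R := n%:R * ((n%:R - 1) * a0 + b0).

(* k_{1,j}, k_{2,j}; the terms f_{j-2}, g_{j-1} only matter when their
   factors j(j-1) resp. j are nonzero *)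
Definition k1 (c2 c3 a0 a1 b0 b1 : R) (j : nat) : R :=
  a0 * j%:R * (j%:R - 1) * (fcoef c2 c3 j.-1 + fcoef c2 c3 j.-2)
  + b0 * j%:R * fcoef c2 c3 j.-1 + a1 * j%:R * (j%:R - 1)
  + b0 * j%:R * gcoef j.-1 + b1 * j%:R.

Definition k2 (c2 c3 a0 a1 a2 b0 b1 : R) (j : nat) : R :=
  a0 * j%:R * (j%:R - 1) * (fcoef c2 c3 j.-2) ^+ 2
  + a1 * j%:R * (j%:R - 1) * fcoef c2 c3 j.-2
  + b0 * j%:R * gcoef j.-1 * fcoef c2 c3 j.-2
  + a2 * j%:R * (j%:R - 1) + b1 * j%:R * gcoef j.-1.

Definition Lop (c2 c3 a0 a1 a2 b0 b1 : R) (n : nat) (f : {poly R}) : {poly R} :=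
  let m := mu c2 c3 in
  let phi := a0 *: m ^+ 2 + a1 *: m + a2%:P in
  let psi := b0 *: m + b1%:P in
  phi * Dop c2 c3 (Dop c2 c3 f) + psi * Sop (Dop c2 c3 f) - lam a0 b0 n *: f.

Definition monic_deg_in_mu (c2 c3 : R) (n : nat) (f : {poly R}) : Prop :=
  exists2 q : {poly R}, (q \is monic) /\ size q = n.+1 & f = q \Po mu c2 c3.

Definition deg_le_in_mu (c2 c3 : R) (d : nat) (f : {poly R}) : Prop :=
  exists2 q : {poly R}, (size q <= d.+1)%N & f = q \Po mu c2 c3.

End Defs.

(* In the basis theta_k both ingredients of U_n are triangular:
   (mu - beta) theta_k = theta_{k+1} + (f_k - beta) theta_k, and, since
   D theta_j = j theta_{j-1} and S theta_j = theta_j + g_j theta_{j-1},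
   L_N theta_j = (lam_j - lam_N) theta_j + k1_j theta_{j-1} + k2_j theta_{j-2}.
   Hence the theta-coordinates of U_n = L_{n+1}((mu - beta) P_n) are explicit in
   those of P_n.  The theta_{n+1}-coordinate carries the factor
   lam_{n+1} - lam_{n+1} = 0; the theta_n-coordinate is
   k1_{n+1} + (p_{1,n} + f_n - beta)(lam_n - lam_{n+1}), which vanishes for the
   stated beta because uniqueness of P_{n+1} forces lam_n <> lam_{n+1}; and the
   theta_{n-1}-coordinate is t_n. *)

From mathcomp Require Import all_boot all_order all_algebra.
From mathcomp Require Import ring.
Set Implicit Arguments. Unset Strict Implicit. Unset Printing Implicit Defensive.
Import Order.TTheory GRing.Theory Num.Theory.
Local Open Scope ring_scope.

Lemma eq_poly_horner (R : numDomainType) (p q : {poly R}) :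
  (forall x, p.[x] = q.[x]) -> p = q.
Proof.
move=> eq_pq; apply/eqP; rewrite -subr_eq0; apply/eqP.
apply: (@roots_geq_poly_eq0 _ _ [seq i%:R | i <- iota 0 (size (p - q))]).
- by apply/allP => _ /mapP [i _ ->]; rewrite /root hornerD hornerN eq_pq subrr.
- by rewrite map_inj_uniq ?iota_uniq // => i j /eqP; rewrite eqr_nat => /eqP.
- by rewrite size_map size_iota.
Qed.

Lemma big_ord_shift (V : nmodType) m (G : nat -> V) :
  G 0 = 0 -> G m = 0 -> \sum_(k < m) G k = \sum_(k < m) G k.+1.
Proof.
move=> G0 Gm; rewrite -[LHS]addr0 -[X in _ + X]Gm.
by rewrite -(big_ord_recr m (fun k => G k)) big_ord_recl /= G0 add0r.
Qed.

Section Theta.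
Variables (R : numFieldType) (c2 c3 : R).
Local Notation mu := (mu c2 c3).
Local Notation theta := (theta c2).
Local Notation f := (fcoef c2 c3).

Lemma horner_mu x : mu.[x] = x ^+ 2 + c2 * x + c3.
Proof. by rewrite /mu !hornerE. Qed.

Lemma horner_theta n x : (theta n).[x] = \prod_(k < n) (mu.[x] - f k).
Proof.
elim: n => [|n IHn].
  by rewrite /theta /pochp !big_ord0 mulr1 expr0 invr1 scale1r hornerC.
rewrite big_ord_recr -IHn /theta /pochp !big_ord_recr /= !hornerZ !hornerM.
rewrite horner_mu !(hornerD, hornerN, hornerZ, hornerX, hornerC) /fcoef -!exprVn exprSr.
by field.
Qed.

Lemma horner_thetaS n x : (theta n.+1).[x] = (theta n).[x] * (mu.[x] - f n).
Proof. by rewrite !horner_theta big_ord_recr. Qed.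

Lemma horner_shiftp (g : {poly R}) x : (shiftp g).[x] = g.[x + 2^-1].
Proof. by rewrite /shiftp horner_comp !(hornerD, hornerX, hornerC). Qed.

Lemma horner_shiftm (g : {poly R}) x : (shiftm g).[x] = g.[x - 2^-1].
Proof. by rewrite /shiftm horner_comp !(hornerD, hornerN, hornerX, hornerC). Qed.

(* Since mu(y) - f_k = (2y + c2 - u_k)(2y + c2 + u_k)/4 with u_k = k + 1/2,
   a half-step shift of y turns u_k into u_{k-1} or u_{k+1}, and the product
   over k telescopes. *)
Lemma horner_theta_shift n x (e : R) : e = 1 \/ e = -1 ->
  (theta n.+1).[x + e / 2] =
  (theta n).[x] * ((2 * x + c2 + e * (2 * n%:R + 1) / 2)
                   * (2 * x + c2 + e * (2 * n%:R + 3) / 2) / 4).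
Proof.
move=> e_unit; elim: n => [|n IHn].
  rewrite horner_thetaS !horner_theta !big_ord0 !horner_mu /fcoef.
  by case: e_unit => ->; field.
rewrite horner_thetaS IHn horner_thetaS !horner_mu /fcoef.
by case: e_unit => ->; field.
Qed.

Lemma horner_shiftp_thetaS n x : (shiftp (theta n.+1)).[x] =
  (theta n).[x] * ((2 * x + c2 + (2 * n%:R + 1) / 2)
                   * (2 * x + c2 + (2 * n%:R + 3) / 2) / 4).
Proof.
have := horner_theta_shift n x (or_introl erefl).
by rewrite horner_shiftp !mul1r.
Qed.

Lemma horner_shiftm_thetaS n x : (shiftm (theta n.+1)).[x] =
  (theta n).[x] * ((2 * x + c2 - (2 * n%:R + 1) / 2)
                   * (2 * x + c2 - (2 * n%:R + 3) / 2) / 4).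
Proof.
have := horner_theta_shift n x (or_intror erefl).
by rewrite horner_shiftm !mulN1r !mulNr.
Qed.

Local Notation W := (shiftp mu - shiftm mu).

Lemma horner_W x : W.[x] = 2 * x + c2.
Proof. by rewrite hornerD hornerN horner_shiftp horner_shiftm !horner_mu; field. Qed.

Lemma W_neq0 : W != 0.
Proof.
apply/eqP => W0; have := horner_W ((1 - c2) / 2).
rewrite W0 hornerC (_ : 2 * ((1 - c2) / 2) + c2 = 1); last by field.
by move/eqP; rewrite eq_sym oner_eq0.
Qed.

Lemma Dop_eq (g h : {poly R}) : shiftp g - shiftm g = h * W -> Dop c2 c3 g = h.
Proof. by rewrite /Dop => ->; rewrite mulpK // W_neq0. Qed.

Lemma Dop_theta n : Dop c2 c3 (theta n) = n%:R *: theta n.-1.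
Proof.
apply: Dop_eq; apply: eq_poly_horner => x.
rewrite hornerD hornerN hornerM hornerZ horner_W.
case: n => [|n]; first by rewrite horner_shiftp horner_shiftm !horner_theta !big_ord0; ring.
by rewrite horner_shiftp_thetaS horner_shiftm_thetaS; field.
Qed.

Lemma Sop_theta n : Sop (theta n) = theta n + gcoef R n *: theta n.-1.
Proof.
apply: eq_poly_horner => x.
rewrite /Sop hornerZ !hornerD (hornerZ (gcoef R n)) /gcoef.
case: n => [|n]; first by rewrite horner_shiftp horner_shiftm !horner_theta !big_ord0; field.
rewrite horner_shiftp_thetaS horner_shiftm_thetaS horner_thetaS /=.
by rewrite horner_mu /fcoef; field.
Qed.

Lemma mul_mu_theta (be : R) k :
  (mu - be%:P) * theta k = theta k.+1 + (f k - be) *: theta k.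
Proof.
apply: eq_poly_horner => x.
rewrite hornerD (hornerZ (f k - be)) horner_thetaS hornerM.
by rewrite !(hornerD, hornerN, hornerC); ring.
Qed.

Lemma thetaS k : theta k.+1 = (mu - (f k)%:P) * theta k.
Proof. by rewrite mul_mu_theta subrr scale0r addr0. Qed.

Definition thetaX n : {poly R} := \prod_(k < n) ('X - (f k)%:P).

Lemma thetaX_monic n : thetaX n \is monic.
Proof. by apply: monic_prod => k _; apply: monicXsubC. Qed.

Lemma size_thetaX n : size (thetaX n) = n.+1.
Proof. by rewrite size_prod_XsubC /index_enum unlock -enumT size_enum_ord. Qed.

Lemma theta_comp n : theta n = thetaX n \Po mu.
Proof.
apply: eq_poly_horner => x.
by rewrite horner_theta horner_comp horner_prod; apply: eq_bigr => k _; rewrite hornerXsubC.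
Qed.

Lemma size_mu : size mu = 3.
Proof.
rewrite /mu -addrA size_polyDl ?size_polyXn // (leq_ltn_trans (size_polyD _ _)) // gtn_max.
by rewrite (leq_ltn_trans (size_scale_leq _ _)) ?size_polyX // (leq_ltn_trans (size_polyC_leq1 _)).
Qed.

Lemma comp_mu_eq0 (q : {poly R}) : (q \Po mu == 0) = (q == 0).
Proof. by rewrite comp_poly_eq0 // size_mu. Qed.

Lemma monic_deg_in_mu_neq0 n g : monic_deg_in_mu c2 c3 n g -> g != 0.
Proof. by case=> q [q_monic _] ->; rewrite comp_mu_eq0 monic_neq0. Qed.

Lemma monic_deg_in_muDl n g h :
  monic_deg_in_mu c2 c3 n.+1 g -> monic_deg_in_mu c2 c3 n h ->
  monic_deg_in_mu c2 c3 n.+1 (g + h).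
Proof.
case=> q [q_monic q_size] -> [r [_ r_size] ->].
have r_lt_q : (size r < size q)%N by rewrite q_size r_size.
exists (q + r); last by rewrite comp_polyD.
by rewrite monicE lead_coefDl // size_polyDl // -monicE.
Qed.

End Theta.

Section Operators.
Variables (R : numFieldType) (c2 c3 a0 a1 a2 b0 b1 : R).
Local Notation mu := (mu c2 c3).
Local Notation theta := (theta c2).
Local Notation L N := (Lop c2 c3 a0 a1 a2 b0 b1 N).
Local Notation lam := (lam a0 b0).
Local Notation k1 := (k1 c2 c3 a0 a1 b0 b1).
Local Notation k2 := (k2 c2 c3 a0 a1 a2 b0 b1).

Lemma DopZ a (g : {poly R}) : Dop c2 c3 (a *: g) = a *: Dop c2 c3 g.
Proof. by rewrite /Dop /shiftp /shiftm !comp_polyZ -scalerBr divpZl. Qed.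

Lemma SopZ a (g : {poly R}) : Sop (a *: g) = a *: Sop g.
Proof. by rewrite /Sop /shiftp /shiftm !comp_polyZ -scalerDr !scalerA mulrC. Qed.

Lemma DopD (g h : {poly R}) : Dop c2 c3 (g + h) = Dop c2 c3 g + Dop c2 c3 h.
Proof. by rewrite /Dop /shiftp /shiftm !comp_polyD opprD addrACA divpD. Qed.

Lemma SopD (g h : {poly R}) : Sop (g + h) = Sop g + Sop h.
Proof. by rewrite /Sop /shiftp /shiftm !comp_polyD addrACA scalerDr. Qed.

Lemma LopD N (g h : {poly R}) : L N (g + h) = L N g + L N h.
Proof. by rewrite /Lop /= !DopD SopD -!(@mul_polyC R); ring. Qed.

Lemma LopZ N a (g : {poly R}) : L N (a *: g) = a *: L N g.
Proof. by rewrite /Lop /= !DopZ SopZ -!(@mul_polyC R); ring. Qed.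

Lemma Lop0 N : L N 0 = 0.
Proof. by have := LopZ N 0 0; rewrite !scale0r. Qed.

Lemma Lop_sum N I (r : seq I) (P : pred I) (F : I -> {poly R}) :
  L N (\sum_(i <- r | P i) F i) = \sum_(i <- r | P i) L N (F i).
Proof. exact: (big_morph _ (LopD N) (Lop0 N)). Qed.

Lemma Lop_lam (N M : nat) g : L N g = L M g + (lam M - lam N) *: g.
Proof. by rewrite /Lop /= scalerBl addrA subrK. Qed.

Lemma Lop_theta N j : L N (theta j) =
  (lam j - lam N) *: theta j + k1 j *: theta j.-1 + k2 j *: theta j.-2.
Proof.
rewrite /Lop /= !Dop_theta DopZ Dop_theta SopZ (Sop_theta c2 c3).
rewrite -!(@mul_polyC R) /lam /k1 /k2 /gcoef.
by case: j => [|[|k]] /=; rewrite ?(thetaS c2 c3); ring.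
Qed.

Definition theta_comb m (c : nat -> R) : {poly R} := \sum_(k < m) c k *: theta k.

Definition mul_mu_coef (be : R) (c : nat -> R) k :=
  (if k is j.+1 then c j else 0) + c k * (fcoef c2 c3 k - be).

Definition Lop_coef N (c : nat -> R) k :=
  c k * (lam k - lam N) + c k.+1 * k1 k.+1 + c k.+2 * k2 k.+2.

Lemma theta_combS m c : theta_comb m.+1 c = theta_comb m c + c m *: theta m.
Proof. exact: big_ord_recr. Qed.

Lemma theta_comb_comp m c :
  theta_comb m c = (\sum_(k < m) c k *: thetaX c2 c3 k) \Po mu.
Proof.
by rewrite [RHS]raddf_sum; apply: eq_bigr => k _; rewrite /= comp_polyZ -theta_comp.
Qed.

Lemma theta_comb_deg_le m c : deg_le_in_mu c2 c3 m.-1 (theta_comb m c).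
Proof.
rewrite theta_comb_comp; eexists; last reflexivity.
apply: leq_trans (leqSpred m).
elim/big_ind: _ => [|p q p_le q_le|k _]; first by rewrite size_poly0.
- by rewrite (leq_trans (size_polyD p q)) // geq_max p_le q_le.
- by rewrite (leq_trans (size_scale_leq _ _)) // size_thetaX.
Qed.

Lemma mul_theta_comb be m c : c m = 0 ->
  (mu - be%:P) * theta_comb m c = theta_comb m.+1 (mul_mu_coef be c).
Proof.
move=> cm0; rewrite /theta_comb /mul_mu_coef mulr_sumr.
under eq_bigr do rewrite -scalerAr (mul_mu_theta c2 c3) scalerDr.
under [RHS]eq_bigr do rewrite scalerDl -scalerA.
rewrite !big_split /= big_ord_recl [in X in _ = _ + X]big_ord_recr /= cm0.
by rewrite !scale0r add0r addr0.
Qed.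

Lemma k1_0 : k1 0 = 0. Proof. by rewrite /k1 !(mul0r, mulr0, addr0). Qed.
Lemma k2_0 : k2 0 = 0. Proof. by rewrite /k2 !(mul0r, mulr0, addr0). Qed.
Lemma k2_1 : k2 1 = 0. Proof. by rewrite /k2 /gcoef subrr !(mul0r, mulr0, addr0). Qed.

Lemma Lop_theta_comb N m c : (forall k, (m <= k)%N -> c k = 0) ->
  L N (theta_comb m c) = theta_comb m (Lop_coef N c).
Proof.
move=> c_supp; rewrite /theta_comb /Lop_coef Lop_sum.
under eq_bigr do rewrite LopZ Lop_theta !scalerDr.
under [RHS]eq_bigr do rewrite !scalerDl -!scalerA.
rewrite !big_split /=; congr (_ + _ + _).
  rewrite (big_ord_shift (G := fun k => c k *: (k1 k *: theta k.-1))) //=.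
    by rewrite k1_0 scale0r scaler0.
  by rewrite c_supp // scale0r.
rewrite (big_ord_shift (G := fun k => c k *: (k2 k *: theta k.-2))) /=; last first.
- by rewrite c_supp // scale0r.
- by rewrite k2_0 scale0r scaler0.
rewrite (big_ord_shift (G := fun k => c k.+1 *: (k2 k.+1 *: theta k.-1))) //=.
  by rewrite k2_1 scale0r scaler0.
by rewrite c_supp // scale0r.
Qed.

Lemma mul_mu_coef_supp be m c : (forall k, (m <= k)%N -> c k = 0) ->
  forall k, (m.+1 <= k)%N -> mul_mu_coef be c k = 0.
Proof.
move=> c_supp [//|k] le_mk; rewrite /mul_mu_coef !c_supp ?mul0r ?addr0 //.
exact: ltnW.
Qed.

Lemma monic_deg_theta_comb m c :
  monic_deg_in_mu c2 c3 m (theta_comb m.+1 c) -> c m = 1.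
Proof.
case=> q [q_monic q_size]; rewrite theta_comb_comp => /eqP.
rewrite -subr_eq0 -comp_polyB comp_mu_eq0 subr_eq0 => /eqP q_eq.
have thetaX_top k : (thetaX c2 c3 k)`_k = 1.
  by have := monicP (thetaX_monic c2 c3 k); rewrite lead_coefE size_thetaX.
have := monicP q_monic; rewrite lead_coefE q_size /= -q_eq coef_sum big_ord_recr /=.
rewrite coefZ thetaX_top mulr1 big1 ?add0r // => k _.
by rewrite coefZ nth_default ?mulr0 // size_thetaX.
Qed.

Definition rev_coef n (q : nat -> R) k := if (k <= n)%N then q (n - k)%N else 0.

Lemma rev_coef_supp n q k : (n < k)%N -> rev_coef n q k = 0.
Proof. by rewrite /rev_coef ltnNge => /negbTE ->. Qed.

Lemma sum_theta_rev n (q : nat -> R) :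
  \sum_(k < n.+1) q k *: theta (n - k)%N = theta_comb n.+1 (rev_coef n q).
Proof.
rewrite (reindex_inj rev_ord_inj); apply: eq_bigr => k _.
by rewrite /rev_coef /= subSS -ltnS ltn_ord subKn // -ltnS.
Qed.

Lemma mul_mu_rev_coef be n (q : nat -> R) : (forall k, (n.+1 < k)%N -> q k = 0) ->
  let e := mul_mu_coef be (rev_coef n.+1 q) in
  [/\ e n.+2 = q 0, e n.+1 = q 1 + q 0 * (fcoef c2 c3 n.+1 - be)
    & e n = q 2 + q 1 * (fcoef c2 c3 n - be)].
Proof.
move=> q_supp /=; rewrite /mul_mu_coef (rev_coef_supp q (ltnSn n.+1)) // mul0r addr0.
rewrite /rev_coef leqnn leqnSn subnn subSnn; split=> //.
by case: n q_supp => [|j] q_supp /=; [rewrite (q_supp 2) | rewrite leqW // -addn2 addKn].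
Qed.

Lemma Lop_coef_top N c : (forall k, (N < k)%N -> c k = 0) -> Lop_coef N c N = 0.
Proof. by move=> c_supp; rewrite /Lop_coef subrr mulr0 !c_supp // !mul0r !addr0. Qed.

Section Eigenpolynomials.
Variable P : nat -> {poly R}.
Hypothesis P_eigen : forall n, monic_deg_in_mu c2 c3 n (P n) /\ L n (P n) = 0.
Hypothesis P_unique :
  forall n Q, monic_deg_in_mu c2 c3 n Q -> L n Q = 0 -> Q = P n.

(* Otherwise P_{n+1} + P_n would be a second monic solution of L_{n+1} f = 0. *)
Lemma lam_neq_lamS n : lam n != lam n.+1.
Proof.
apply/eqP => lam_eq.
have [Pn_monic LPn] := P_eigen n; have [PSn_monic LPSn] := P_eigen n.+1.
have : P n.+1 + P n = P n.+1.
  apply: P_unique; first exact: monic_deg_in_muDl.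
  by rewrite LopD LPSn (Lop_lam n.+1 n) LPn lam_eq subrr scale0r !add0r.
rewrite -[RHS]addr0 => /addrI Pn0.
by move: (monic_deg_in_mu_neq0 Pn_monic); rewrite Pn0 eqxx.
Qed.

End Eigenpolynomials.

End Operators.

Theorem lemma4p2 (R : numFieldType) (c2 c3 a0 a1 a2 b0 b1 : R)
  (P : nat -> {poly R}) (p : nat -> nat -> R) :
  (* P_n is the unique monic polynomial of degree n in mu with L_n(P_n) = 0 *)
  (forall n, monic_deg_in_mu c2 c3 n (P n) /\ Lop c2 c3 a0 a1 a2 b0 b1 n (P n) = 0) ->
  (forall n Q, monic_deg_in_mu c2 c3 n Q -> Lop c2 c3 a0 a1 a2 b0 b1 n Q = 0 -> Q = P n) ->
  (* P_n = theta_n + p_{1,n} theta_{n-1} + p_{2,n} theta_{n-2} + ... *)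
  (forall n, P n = \sum_(k < n.+1) p n k *: theta c2 (n - k)) ->
  (forall n k, (n < k)%N -> p n k = 0) ->
  forall n : nat, (1 <= n)%N ->
  exists beta : R,
    let U := Lop c2 c3 a0 a1 a2 b0 b1 n.+1 ((mu c2 c3 - beta%:P) * P n) in
    [/\ deg_le_in_mu c2 c3 n.-1 U,
        beta = p n 1%N + fcoef c2 c3 n
               + k1 c2 c3 a0 a1 b0 b1 n.+1 / (lam a0 b0 n - lam a0 b0 n.+1)
      & exists d : nat -> R,
          U = (k2 c2 c3 a0 a1 a2 b0 b1 n.+1
               + (fcoef c2 c3 n + p n 1%N - beta) * k1 c2 c3 a0 a1 b0 b1 n
               + (p n 1%N * fcoef c2 c3 n.-1 + p n 2%N - beta * p n 1%N)
                 * (lam a0 b0 n.-1 - lam a0 b0 n.+1)) *: theta c2 n.-1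
              + \sum_(k < n.-1) d k *: theta c2 k].
Proof.
move=> P_eigen P_unique P_expand p_vanish [//|m] _.
have p_top : p m.+1 0 = 1.
  have := (P_eigen m.+1).1; rewrite P_expand sum_theta_rev.
  by move/monic_deg_theta_comb; rewrite /rev_coef leqnn subnn.
have lam_neq := lam_neq_lamS P_eigen P_unique m.+1.
set beta := p m.+1 1 + _ + _; exists beta => /=.
have [e_top e_next e_m] := mul_mu_rev_coef c2 c3 beta (p_vanish m.+1).
set e := mul_mu_coef c2 c3 beta _ in e_top e_next e_m.
have e_supp k : (m.+2 < k)%N -> e k = 0.
  by apply: mul_mu_coef_supp => j; apply: rev_coef_supp.
set u := Lop_coef c2 c3 a0 a1 a2 b0 b1 m.+2 e.
have U_comb :
    Lop c2 c3 a0 a1 a2 b0 b1 m.+2 ((mu c2 c3 - beta%:P) * P m.+1) = theta_comb c2 m.+3 u.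
  by rewrite P_expand sum_theta_rev mul_theta_comb ?rev_coef_supp // Lop_theta_comb.
have u_top : u m.+2 = 0 by apply: Lop_coef_top.
have u_next : u m.+1 = 0.
  rewrite /u /Lop_coef (e_supp m.+3) // e_top e_next p_top /beta.
  by field; rewrite subr_eq0.
rewrite U_comb 2!theta_combS u_top u_next !scale0r !addr0; split=> //.
  exact: (theta_comb_deg_le c2 c3 m.+1 u).
exists u; rewrite theta_combS addrC; congr (_ *: _ + _).
by rewrite /u /Lop_coef e_m e_next e_top p_top; ring.
Qed.
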